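(* Let $R_0,r,V_T>0$ and define, for $t\ge 0$ and $V_s>0$, $$f(t,V_s)=1+\frac{1}{2R_0(R_0+r)}\left(r^2-V_T^2\left(\frac{2\pi R_0}{V_s}+t\right)^2\right)-\cos\!\left(\frac{V_s t}{R_0}\right).$$ Let $\Omega=\{(t,V_s): V_s>0,\ 0\le t\le \frac{\pi R_0}{2V_s}\}$. Then $\frac{\partial f}{\partial V_s}(t,V_s)>0$ for all $(t,V_s)\in\Omega$. Consequently $f$, as a function of the two variables $(t,V_s)$, has no critical (in particular no minimum) points in the interior of $\Omega$, and $f$ is monotonically increasing in $V_s$ on $\Omega$: for each fixed $t\ge 0$, $V_s\mapsto f(t,V_s)$ is increasing on $\{V_s>0: t\le \pi R_0/(2V_s)\}$.
   Context: Here $R_0$ is the initial radius of the disk containing the evaders, $2r$ is the length of the sweeper's line sensor, $V_T$ is the maximal evader speed, and $V_s$ is the sweeper's speed. The times of interest are $0\le t\le \pi R_0/(2V_s)$, i.e. up to a quarter revolution of the sweeper around the disk. *)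

From Stdlib Require Import Reals Lra.
From Coquelicot Require Import Coquelicot.
Open Scope R_scope.

Definition fsweep (Rzero r VT : R) (t Vs : R) : R :=
  1 + / (2 * Rzero * (Rzero + r)) * (r ^ 2 - VT ^ 2 * (2 * PI * Rzero / Vs + t) ^ 2)
    - cos (Vs * t / Rzero).

Definition Omega (Rzero : R) (t Vs : R) : Prop :=
  0 < Vs /\ 0 <= t <= PI * Rzero / (2 * Vs).

Definition Omega_int (Rzero : R) (t Vs : R) : Prop :=
  0 < Vs /\ 0 < t < PI * Rzero / (2 * Vs).

(** In [f] the variable [V_s] enters twice: through the penalty
    [-V_T^2 (2 pi R_0 / V_s + t)^2], whose bracket decreases in [V_s], so the
    penalty increases; and through [-cos (V_s t / R_0)], which increases in
    [V_s] as long as the phase [V_s t / R_0] stays in [[0, pi]].  On [Omega]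
    the phase is at most [pi / 2], so the partial derivative in [V_s] is a
    positive term plus a nonnegative one.  Since [Omega] is downward closed in
    [V_s], monotonicity follows on every segment [[v1, v2]], and a point where
    the [V_s]-derivative vanishes cannot exist. *)

From Stdlib Require Import Reals Lra.
From Coquelicot Require Import Coquelicot.
Open Scope R_scope.

Definition fsweep_dVs (Rzero r VT t Vs : R) : R :=
  2 * PI * VT ^ 2 * (2 * PI * Rzero / Vs + t) / ((Rzero + r) * Vs ^ 2)
  + t / Rzero * sin (Vs * t / Rzero).

Lemma is_derive_fsweep_Vs (Rzero r VT t Vs : R) :
  Rzero <> 0 -> Rzero + r <> 0 -> Vs <> 0 ->
  is_derive (fun v => fsweep Rzero r VT t v) Vs (fsweep_dVs Rzero r VT t Vs).
Proof.
  intros hR0 hR0r hVs; unfold fsweep, fsweep_dVs.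
  auto_derive.
  - repeat split; auto.
  - unfold Rdiv; field; auto.
Qed.

Lemma Omega_phase_bounds (Rzero t Vs : R) :
  0 < Rzero -> Omega Rzero t Vs -> 0 <= Vs * t / Rzero <= PI / 2.
Proof.
  intros hR0 [hVs [ht0 ht]].
  assert (hVst : Vs * t <= PI * Rzero / 2).
  { apply Rmult_le_compat_l with (r := Vs) in ht; [|lra].
    replace (Vs * (PI * Rzero / (2 * Vs))) with (PI * Rzero / 2) in ht
      by (field; lra).
    exact ht. }
  split.
  - apply Rdiv_le_0_compat; nra.
  - apply Rmult_le_reg_r with Rzero; [exact hR0|].
    replace (Vs * t / Rzero * Rzero) with (Vs * t) by (field; lra).
    lra.
Qed.

Lemma Omega_le_Vs (Rzero t v1 v2 : R) :
  0 < Rzero -> 0 < v1 <= v2 -> Omega Rzero t v2 -> Omega Rzero t v1.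
Proof.
  intros hR0 [hv1 hv12] [_ [ht0 ht]].
  assert (hPI := PI_RGT_0).
  repeat split; try lra.
  apply Rle_trans with (1 := ht); unfold Rdiv.
  apply Rmult_le_compat_l; [nra|].
  apply Rinv_le_contravar; lra.
Qed.

Lemma fsweep_dVs_gt0 (Rzero r VT t Vs : R) :
  0 < Rzero -> 0 < r -> 0 < VT -> Omega Rzero t Vs ->
  0 < fsweep_dVs Rzero r VT t Vs.
Proof.
  intros hR0 hr hVT hOm.
  pose proof (Omega_phase_bounds Rzero t Vs hR0 hOm) as hphase.
  destruct hOm as [hVs [ht0 _]].
  assert (hPI := PI_RGT_0).
  unfold fsweep_dVs; apply Rplus_lt_le_0_compat.
  - apply Rdiv_lt_0_compat.
    + apply Rmult_lt_0_compat.
      * apply Rmult_lt_0_compat; [lra | apply pow_lt; lra].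
      * apply Rplus_lt_le_0_compat; [|lra].
        apply Rdiv_lt_0_compat; [nra | lra].
    + apply Rmult_lt_0_compat; [lra | apply pow_lt; lra].
  - apply Rmult_le_pos.
    + apply Rdiv_le_0_compat; lra.
    + apply sin_ge_0; lra.
Qed.

Theorem theorem3 (Rzero r VT : R) (hR0 : 0 < Rzero) (hr : 0 < r) (hVT : 0 < VT) :
  (* the partial derivative in V_s exists and is positive on Omega *)
  (forall t Vs, Omega Rzero t Vs ->
     ex_derive (fun v => fsweep Rzero r VT t v) Vs /\
     Derive (fun v => fsweep Rzero r VT t v) Vs > 0) /\
  (* no critical points of f(t,V_s) in the interior of Omega *)
  (forall t Vs, Omega_int Rzero t Vs ->
     ~ (is_derive (fun s => fsweep Rzero r VT s Vs) t 0 /\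
        is_derive (fun v => fsweep Rzero r VT t v) Vs 0)) /\
  (* monotonically increasing in V_s for fixed t >= 0 *)
  (forall t v1 v2, 0 <= t -> 0 < v1 -> v1 < v2 ->
     t <= PI * Rzero / (2 * v2) ->
     fsweep Rzero r VT t v1 < fsweep Rzero r VT t v2).
Proof.
  (* The annotation [v : R] keeps the [Derive] terms syntactically equal to those of the statement. *)
  assert (hderiv : forall t Vs, 0 < Vs ->
    is_derive (fun v : R => fsweep Rzero r VT t v) Vs (fsweep_dVs Rzero r VT t Vs)).
  { intros t Vs hVs; apply is_derive_fsweep_Vs; lra. }
  split; [|split].
  - intros t Vs hOm; pose proof (proj1 hOm) as hVs; split.
    + exact (ex_intro _ _ (hderiv t Vs hVs)).
    + rewrite (is_derive_unique _ _ _ (hderiv t Vs hVs)).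
      now apply fsweep_dVs_gt0.
  - intros t Vs [hVs ht] [_ hcrit].
    assert (hOm : Omega Rzero t Vs) by (repeat split; lra).
    assert (hzero : fsweep_dVs Rzero r VT t Vs = 0).
    { rewrite <- (is_derive_unique _ _ _ hcrit).
      symmetry; apply is_derive_unique, hderiv, hVs. }
    pose proof (fsweep_dVs_gt0 Rzero r VT t Vs hR0 hr hVT hOm).
    lra.
  - intros t v1 v2 ht0 hv1 hv12 ht.
    assert (hOm : forall v, v1 <= v <= v2 -> Omega Rzero t v).
    { intros v hv; apply Omega_le_Vs with v2; [exact hR0 | lra | repeat split; lra]. }
    apply (incr_function_le _ v1 v2 (fsweep_dVs Rzero r VT t)); simpl.
    + intros x hx1 hx2; apply hderiv; lra.
    + intros x hx1 hx2; apply fsweep_dVs_gt0; auto.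
    + apply Rle_refl.
    + exact hv12.
    + apply Rle_refl.
Qed.
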